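(* Let $f \in \mathbb{Z}[x]$ be a tower-stable polynomial, let $a$ be a positive integer, let $p$ be a prime number and $k$ a positive integer. Put $\kappa = \kappa_{f,a}$, $\lambda = \lambda_{f,a}$ and $$\mu_p = \prod_{i=0}^{\lambda(p)-1} f'\big(f^{\kappa(p)+i}(a)\big).$$ (i) If $\mu_p \equiv 0 \pmod p$, then $\lambda(p^k) = \lambda(p)$ and $\kappa(p^k) \le \kappa(p) + (k-1)\lambda(p)$. (ii) If $\mu_p \not\equiv 0 \pmod p$, then $\kappa(p^k) = \kappa(p)$ and $\lambda(p^k)$ divides $\lambda(p)\cdot(p-1)\cdot p^{k-1}$.
   Context: $f^j$ is the $j$-th iterate of $f$ and $f'$ its derivative. For a positive integer $n$, $f_n:\mathbb{Z}/n\mathbb{Z}\to\mathbb{Z}/n\mathbb{Z}$ is the reduction of $f$. $\kappa_{f,a}(n)$ (tail length) and $\lambda_{f,a}(n)$ (cycle length) are the unique integers $\kappa\ge0$, $\lambda\ge1$ such that for all $k'\ge0$, $l'\ge1$: $f_n^{k'}(\bar a) = f_n^{k'+l'}(\bar a)$ iff $\kappa\le k'$ and $\lambda\mid l'$, where $\bar a = a \bmod n$. $f$ is tower-stable if for every prime $q$, $f_q$ is not a cyclic permutation of $\mathbb{Z}/q\mathbb{Z}$ of length $q$. *)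

From mathcomp Require Import all_boot all_order all_algebra.
Set Implicit Arguments. Unset Strict Implicit. Unset Printing Implicit Defensive.
Import Order.TTheory GRing.Theory Num.Theory.

Definition iterf (f : {poly int}) (j : nat) (x : int) : int :=
  iter j (fun y => (f.[y])%R) x.

Definition congr_mod (x y : int) (n : nat) : Prop := (x == y %[mod n%:Z])%Z.

(* Since f has integer coefficients, f_n^j(x mod n) = f^j(x) mod n; hence
   f_n^{k'}(a mod n) = f_n^{k'+l'}(a mod n) iff f^{k'}(a) = f^{k'+l'}(a) mod n.
   tail_cycle f a n kappa lambda : kappa = kappa_{f,a}(n), lambda = lambda_{f,a}(n),
   i.e. kappa >= 0, lambda >= 1 and for all k' >= 0, l' >= 1:
   f_n^{k'}(a) = f_n^{k'+l'}(a)  <->  kappa <= k' and lambda | l'. *)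
Definition tail_cycle (f : {poly int}) (a : int) (n kappa lambda : nat) : Prop :=
  (1 <= lambda)%N /\
  forall k' l' : nat, (1 <= l')%N ->
    (congr_mod (iterf f k' a) (iterf f (k' + l') a) n <->
     ((kappa <= k')%N /\ (lambda %| l')%N)).

(* f_q is a cyclic permutation of Z/qZ of length q: some orbit has q pairwise
   distinct points mod q and closes up after q steps. *)
Definition full_cycle_mod (f : {poly int}) (q : nat) : Prop :=
  exists x : int,
    (forall i j : nat, (i < q)%N -> (j < q)%N ->
       congr_mod (iterf f i x) (iterf f j x) q -> i = j) /\
    congr_mod (iterf f q x) x q.

Definition tower_stable (f : {poly int}) : Prop :=
  forall q : nat, prime q -> ~ full_cycle_mod f q.

From mathcomp Require Import all_boot all_algebra finfield ring zify.
Set Implicit Arguments. Unset Strict Implicit. Unset Printing Implicit Defensive.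
Import GRing.Theory.
Local Open Scope ring_scope.

(* Let x = f^kappa(a) and g = f^lambda, with kappa, lambda the tail and cycle
   lengths mod p.  Then g maps the residue class of x mod p to itself, and by the
   chain rule applied to first-order Taylor expansions of f it has "slope mu mod p"
   there: g y - g z = (y - z)(mu + p w).  If p | mu, g contracts the class, so that
   g^(j+1) x = g^j x mod p^(j+1).  Otherwise h = g^(p-1) has slope 1 mod p by
   Fermat, and if h x = x mod p^(m+1) then h^p x = x mod p^(m+2), because
   h^j x - x = j (h x - x) mod p^(m+2).  In both cases the resulting congruence
   mod p^k is read off through the definition of kappa(p^k), lambda(p^k), which
   also gives kappa(p) <= kappa(p^k) and lambda(p) | lambda(p^k). *)

Definition slope_mod (d x : int) (g : int -> int) (u : int) : Prop :=
  forall y z, (d %| y - x)%Z -> (d %| z - x)%Z ->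
  exists w, g y - g z = (y - z) * (u + d * w).

Section SlopeMod.

Variable d : int.

Lemma slope_mod_class x g u y :
  slope_mod d x g u -> (d %| y - x)%Z -> (d %| g y - g x)%Z.
Proof.
move=> slope_g yx; have xx : (d %| x - x)%Z by rewrite subrr dvdz0.
by have [w ->] := slope_g y x yx xx; apply: dvdz_mulr.
Qed.

Lemma slope_mod_center x x' g u :
  (d %| x' - x)%Z -> slope_mod d x g u -> slope_mod d x' g u.
Proof.
by move=> x'x slope_g y z yx' zx'; apply: slope_g; rewrite -(subrKA x') rpredD.
Qed.

Lemma slope_mod_congr x g u u' :
  (d %| u - u')%Z -> slope_mod d x g u -> slope_mod d x g u'.
Proof.
case/dvdzP=> t Ht slope_g y z yx zx; have [w ->] := slope_g y z yx zx.
by exists (t + w); rewrite -[u](subrK u') Ht; ring.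
Qed.

Lemma slope_mod_comp x g1 g2 u1 u2 :
  slope_mod d x g1 u1 -> slope_mod d (g1 x) g2 u2 ->
  slope_mod d x (g2 \o g1) (u1 * u2).
Proof.
move=> slope1 slope2 y z yx zx /=.
have [w1 E1] := slope1 y z yx zx.
have [w2 ->] := slope2 _ _ (slope_mod_class slope1 yx) (slope_mod_class slope1 zx).
by exists (w1 * u2 + u1 * w2 + d * w1 * w2); rewrite E1; ring.
Qed.

Section FixedClass.

Variables (x : int) (g : int -> int) (u : int).
Hypotheses (slope_g : slope_mod d x g u) (gx : (d %| g x - x)%Z).

Lemma iter_class_mod j : (d %| iter j g x - x)%Z.
Proof.
elim: j => [|j IHj] /=; first by rewrite subrr dvdz0.
by rewrite -(subrKA (g x)) rpredD // (slope_mod_class slope_g).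
Qed.

Lemma slope_mod_iter j : slope_mod d x (iter j g) (u ^+ j).
Proof.
elim: j => [|j IHj].
  by move=> y z _ _; exists 0; rewrite /=; ring.
rewrite exprSr; apply: (slope_mod_comp IHj).
exact: slope_mod_center (iter_class_mod j) slope_g.
Qed.

Lemma iter_step_dvdz j : (d %| u)%Z -> (d ^+ j.+1 %| iter j.+1 g x - iter j g x)%Z.
Proof.
move=> du; elim: j => [|j IHj]; first by rewrite expr1.
have [w ->] := slope_g (iter_class_mod j.+1) (iter_class_mod j).
by rewrite exprSr dvdz_mul // rpredD // dvdz_mulr.
Qed.

End FixedClass.

End SlopeMod.

Lemma iter_linear_mod (n e : nat) x h j :
  slope_mod n x h 1 -> (n%:Z ^+ e.+1 %| h x - x)%Z ->
  (n%:Z ^+ e.+2 %| iter j h x - x - j%:Z * (h x - x))%Z.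
Proof.
move=> slope_h hx; have xx : (n%:Z %| x - x)%Z by rewrite subrr dvdz0.
have nhx : (n%:Z %| h x - x)%Z := dvdz_trans (dvdz_exp2l _ (ltn0Sn e)) hx.
elim: j => [|j IHj]; first by rewrite mul0r !subrr dvdz0.
have Dj : (n%:Z ^+ e.+1 %| iter j h x - x)%Z.
  rewrite -(subrK (j%:Z * (h x - x)) (_ - x)) rpredD ?dvdz_mull //.
  exact: dvdz_trans (dvdz_exp2l _ (leqnSn _)) IHj.
have [w Ew] := slope_h _ x (iter_class_mod slope_h nhx j) xx.
have -> : iter j.+1 h x - x - j.+1%:Z * (h x - x) =
    (iter j h x - x) * n%:Z * w + (iter j h x - x - j%:Z * (h x - x)).
  by rewrite /= -(subrK (h x) (h _)) Ew intS; ring.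
by rewrite rpredD // exprSr dvdz_mulr // dvdz_mul.
Qed.

Lemma iter_expn_dvdz (n : nat) x g m :
  slope_mod n x g 1 -> (n%:Z %| g x - x)%Z ->
  (n%:Z ^+ m.+1 %| iter (n ^ m) g x - x)%Z.
Proof.
move=> slope_g gx; elim: m => [|m IHm]; first by rewrite expr1.
have := slope_mod_iter slope_g gx (n ^ m); rewrite expr1n => slope_h.
have := iter_linear_mod n slope_h IHm; rewrite expnS iterM => D.
by rewrite -(subrK (n%:Z * (iter (n ^ m) g x - x)) (_ - x)) rpredD // exprS dvdz_mul.
Qed.

Lemma horner_sub_deriv (f : {poly int}) x y :
  exists h, f.[y] - f.[x] = (y - x) * (f^`().[x] + (y - x) * h).
Proof.
elim/poly_ind: f => [|q c [h IH]].
  by exists 0; rewrite deriv0 !horner0; ring.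
move/eqP: IH; rewrite subr_eq => /eqP IH.
exists (q^`().[x] + h * y).
by rewrite derivMXaddC !hornerMXaddC hornerD hornerM hornerX IH; ring.
Qed.

Lemma slope_mod_horner (f : {poly int}) d x : slope_mod d x (horner f) f^`().[x].
Proof.
move=> y z yx zx.
have /dvdzP[s Es] : (d %| f^`().[z] - f^`().[x])%Z.
  by have [h ->] := horner_sub_deriv f^`() x z; apply: dvdz_mulr.
have /dvdzP[t Et] : (d %| y - z)%Z by rewrite -(subrKA x) rpredD // -opprB rpredN.
have [h ->] := horner_sub_deriv f z y.
exists (s + t * h); congr (_ * _).
by rewrite Et -[f^`().[z]](subrK f^`().[x]) Es; ring.
Qed.

Lemma slope_mod_iterf (f : {poly int}) d x n :
  slope_mod d x (iterf f n) (\prod_(i < n) f^`().[iterf f i x]).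
Proof.
elim: n => [|n IHn].
  by rewrite big_ord0 => y z _ _; exists 0; rewrite /=; ring.
by rewrite big_ord_recr; apply: slope_mod_comp IHn (@slope_mod_horner f d (iterf f n x)).
Qed.

Lemma fermat_int (p : nat) (u : int) :
  prime p -> ~~ (p%:Z %| u)%Z -> (p%:Z %| u ^+ p.-1 - 1)%Z.
Proof.
move=> p_prime; rewrite !(dvdz_pcharf (pchar_Fp p_prime)).
rewrite rmorphB rmorphXn rmorph1 /= subr_eq0 => u_neq0.
have := expf_card (u%:~R : 'F_p); rewrite card_Fp // -(prednK (prime_gt0 p_prime)).
by move=> E; apply/eqP/(mulfI u_neq0); rewrite mulr1 -exprS.
Qed.

Lemma iterfD (f : {poly int}) m n a : iterf f m (iterf f n a) = iterf f (n + m) a.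
Proof. by rewrite /iterf -iterD addnC. Qed.

Lemma iter_iterf (f : {poly int}) m n j a :
  iter j (iterf f m) (iterf f n a) = iterf f (n + m * j) a.
Proof. by rewrite -iterM -/(iterf f _ _) iterfD mulnC. Qed.

Lemma tail_cycle_dvdz f a n kappa lambda {k' l' : nat} :
  tail_cycle f a n kappa lambda -> (0 < l')%N ->
  (n%:Z %| iterf f (k' + l') a - iterf f k' a)%Z <->
  (kappa <= k')%N /\ (lambda %| l')%N.
Proof. by case=> _ cycle l'_gt0; rewrite -opprB rpredN -eqz_mod_dvd; apply: cycle. Qed.

Lemma tail_cycle_dvdn f a m n km lm kn ln :
  (m %| n)%N -> tail_cycle f a m km lm -> tail_cycle f a n kn ln ->
  (km <= kn)%N /\ (lm %| ln)%N.
Proof.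
move=> mn Tm Tn; have ln_gt0 : (0 < ln)%N := Tn.1.
apply/(tail_cycle_dvdz Tm ln_gt0); apply: dvdz_trans (_ : m%:Z %| n%:Z)%Z _.
  by rewrite dvdzE.
by apply/(tail_cycle_dvdz Tn ln_gt0); rewrite leqnn dvdnn.
Qed.

Theorem theorem4p3 (f : {poly int}) (a : int) (p k : nat)
    (kp lp kpk lpk : nat) :
  tower_stable f -> (0 < a)%R -> prime p -> (0 < k)%N ->
  tail_cycle f a p kp lp ->
  tail_cycle f a (p ^ k) kpk lpk ->
  let mu : int := (\prod_(i < lp) (deriv f).[iterf f (kp + i) a])%R in
  ((p%:Z %| mu)%Z -> lpk = lp /\ (kpk <= kp + (k - 1) * lp)%N) /\
  (~~ (p%:Z %| mu)%Z -> kpk = kp /\ (lpk %| lp * (p - 1) * p ^ (k - 1))%N).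
Proof.
move=> _ _ p_prime k_gt0 Tp Tpk mu.
set x := iterf f kp a; set g := iterf f lp.
have lp_gt0 : (0 < lp)%N := Tp.1.
have slope_g : slope_mod p x g mu.
  suff -> : mu = \prod_(i < lp) f^`().[iterf f i x] by apply: slope_mod_iterf.
  by apply: eq_bigr => i _; rewrite iterfD.
have gx : (p%:Z %| g x - x)%Z.
  rewrite -[g x]/(iter 1 g x) iter_iterf muln1.
  by apply/(tail_cycle_dvdz Tp lp_gt0); rewrite leqnn dvdnn.
have [kp_le lp_dvd] := tail_cycle_dvdn (dvdn_exp k_gt0 (dvdnn p)) Tp Tpk.
have pk : (p ^ k)%N%:Z = p%:Z ^+ k by rewrite -natz natrX natz.
have k_pred : k = (k - 1).+1 by lia.
split=> [p_dvd_mu | p_ndvd_mu].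
  have := iter_step_dvdz slope_g gx (k - 1) p_dvd_mu.
  rewrite -k_pred !iter_iterf -pk {1}k_pred mulnSr addnA [(lp * _)%N]mulnC.
  move/(tail_cycle_dvdz Tpk lp_gt0) => [kpk_le lpk_dvd].
  by split=> //; apply/eqP; rewrite eqn_dvd lpk_dvd lp_dvd.
have slope_h : slope_mod p x (iter p.-1 g) 1.
  exact: slope_mod_congr (fermat_int p_prime p_ndvd_mu) (slope_mod_iter slope_g gx p.-1).
have := iter_expn_dvdz (k - 1) slope_h (iter_class_mod slope_g gx p.-1).
rewrite -k_pred -iterM iter_iterf -pk.
have l_gt0 : (0 < lp * (p ^ (k - 1) * p.-1))%N.
  by have := prime_gt1 p_prime; rewrite !muln_gt0 lp_gt0 expn_gt0 prime_gt0 //=; lia.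
move/(tail_cycle_dvdz Tpk l_gt0) => [kpk_le lpk_dvd].
split; first by apply/eqP; rewrite eqn_leq kpk_le kp_le.
by rewrite subn1 -mulnA [(p.-1 * _)%N]mulnC.
Qed.
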